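(* Let $(Q,\mathcal M)$ be a modulated quiver with $\mathcal M$ v-uniform, $I$ an admissible ideal of $T(Q,\mathcal M)$, $\Psi$ a complexification isomorphism, $J=\Psi(\mathbf e(I\otimes_{\mathbb R}\mathbb C)\mathbf e)$, and $p$ a path of $Q$. (1) If $\mathcal M$ is v-uniform with $\mathbb R$ or with $\mathbb H$, then $\Gamma=Q$, the path $p$ of $\Gamma$ is the only fiber of $p$, and $p\in R_I$ if and only if $p\in J$. (2) If $\mathcal M$ is v-uniform with $\mathbb C$, then $p$ has exactly two fibers $p',p''$ in $\Gamma$, and $p\in R_I\iff p'\in J\iff p''\in J$.
   Context: Quivers $Q=(Q_0,Q_1,s,t)$ are finite; an arrow $\alpha$ goes from $s(\alpha)$ to $t(\alpha)$. Paths are written from right to left: a path of length $n\ge1$ is $p=\alpha_n\cdots\alpha_1$ with $t(\alpha_k)=s(\alpha_{k+1})$; each vertex $i$ has a trivial path $e_i$. For a division ring $D$, $DQ$ denotes the path algebra of $Q$ over $D$ (free left $D$-module on the paths, scalars commuting with paths, multiplication by concatenation). Let $\mathbb H=\{\begin{bmatrix}a&b\\-\bar b&\bar a\end{bmatrix}:a,b\in\mathbb C\}\subset M_2(\mathbb C)$ be the real quaternions. A modulation $\mathcal M$ of $Q$ assigns to each vertex $i$ a division ring $\mathcal M(i)\in\{\mathbb R,\mathbb C,\mathbb H\}$ and to each arrow $\alpha$ a simple $\mathcal M(t(\alpha))$-$\mathcal M(s(\alpha))$-bimodule $\mathcal M(\alpha)$ on which $\mathbb R$ acts centrally; $(Q,\mathcal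 M)$ is a modulated quiver. Up to isomorphism there is exactly one such simple bimodule for each pair of these division rings other than $(\mathbb C,\mathbb C)$, and for $(\mathbb C,\mathbb C)$ there are exactly two: $\mathbb C$ with action $a\cdot z\cdot b=azb$, and $\overline{\mathbb C}$, which is $\mathbb C$ as a set with action $a\cdot z\cdot b=az\bar b$. For a path $p=\alpha_n\cdots\alpha_1$ put $\mathcal M(p)=\mathcal M(\alpha_n)\otimes_{\mathcal M(s(\alpha_n))}\cdots\otimes_{\mathcal M(s(\alpha_2))}\mathcal M(\alpha_1)$, and $\mathcal M(e_i)=\mathcal M(i)$. The tensor algebra is $T(Q,\mathcal M)=\prod_{i\in Q_0}\mathcal M(i)\oplus\bigoplus_{p}\mathcal M(p)$ (sum over paths of length $\ge1$). An ideal $I$ of $T(Q,\mathcal M)$ is admissible if $A^m\subseteq I\subseteq A^2$ for some $m\ge2$, where $A$ is the ideal generated by $\bigoplus_{\alpha\in Q_1}\mathcal M(\alpha)$. $\mathcal M$ is v-uniform with $D\in\{\mathbb R,\mathbb C,\mathbb H\}$ if $\mathcal M(i)=D$ for all $i\in Q_0$. Then every $\mathcal M(\alpha)$ has underlying set $D$, and for a path $p$ we write $1_{\mathcal M(p)}=1\otimes\cdots\otimes1\in\mathcal M(p)$ ($1_{\mathcal M(e_i)}$ being the identity of $\mathcal M(i)$). For an ideal $I$ of $T(Q,\mathcal M)$ put $R_I=\{\sum_k d_kp_k\in DQ:\ \sum_k d_k1_{\mathcal M(p_k)}\in I\}$, an ideal of $DQ$. The quiver $\Gamma$ of $(Q,\mathcal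 M)$: each $i\in Q_0$ with $\mathcal M(i)\in\{\mathbb R,\mathbb H\}$ gives one vertex $i$ of $\Gamma$; each $i$ with $\mathcal M(i)=\mathbb C$ gives two vertices $i,\bar i$. Each arrow $\alpha:i\to j$ of $Q$ gives arrows of $\Gamma$ as follows: if $\mathcal M(i)=\mathcal M(j)\in\{\mathbb R,\mathbb H\}$, one arrow $\alpha:i\to j$; if $\mathcal M(i)=\mathbb C$ and $\mathcal M(j)\in\{\mathbb R,\mathbb H\}$, arrows $\alpha:i\to j$, $\bar\alpha:\bar i\to j$; if $\mathcal M(i)\in\{\mathbb R,\mathbb H\}$ and $\mathcal M(j)=\mathbb C$, arrows $\alpha:i\to j$, $\bar\alpha:i\to\bar j$; if $\{\mathcal M(i),\mathcal M(j)\}=\{\mathbb R,\mathbb H\}$, two arrows $\alpha,\bar\alpha:i\to j$; if $\mathcal M(i)=\mathcal M(j)=\mathbb C$ and $\mathcal M(\alpha)=\mathbb C$, arrows $\alpha:i\to j$, $\bar\alpha:\bar i\to\bar j$; if $\mathcal M(i)=\mathcal M(j)=\mathbb C$ and $\mathcal M(\alpha)=\overline{\mathbb C}$, arrows $\alpha:\bar i\to j$, $\bar\alpha:i\to\bar j$. The map $\pi:\Gamma\to Q$ sends $i,\bar i\mapsto i$ and $\alpha,\bar\alpha\mapsto\alpha$. A vertex or arrow $x$ of $\Gamma$ is a fiber of $\pi(x)$; a path $\beta_n\cdots\beta_1$ of $\Gamma$ is a fiber of the path $\pi(\beta_n)\cdots\pi(\beta_1)$ of $Q$, and the fibers of a trivial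 path $e_i$ are the trivial paths $e_{i'}$ with $i'$ a fiber of $i$. Identify $\mathbb R\otimes_{\mathbb R}\mathbb C=\mathbb C$, $\mathbb H\otimes_{\mathbb R}\mathbb C\cong M_2(\mathbb C)$ via $h\otimes c\mapsto ch$, and $\mathbb C\otimes_{\mathbb R}\mathbb C\cong\mathbb C\times\mathbb C$ via $a\otimes b\mapsto(ab,\bar ab)$. Let $\mathbf e=(\epsilon_i)_{i\in Q_0}\in\prod_i\mathcal M(i)\otimes_{\mathbb R}\mathbb C\subseteq T(Q,\mathcal M)\otimes_{\mathbb R}\mathbb C$, where $\epsilon_i=1$ if $\mathcal M(i)\in\{\mathbb R,\mathbb C\}$ and $\epsilon_i$ corresponds to the matrix unit $\begin{bmatrix}1&0\\0&0\end{bmatrix}$ if $\mathcal M(i)=\mathbb H$. A complexification isomorphism for $(Q,\mathcal M)$ is a $\mathbb C$-algebra isomorphism $\Psi:\mathbf e(T(Q,\mathcal M)\otimes_{\mathbb R}\mathbb C)\mathbf e\to\mathbb C\Gamma$ such that for every path $p$ of $Q$ (trivial or not), $\Psi(\mathbf e(\mathcal M(p)\otimes_{\mathbb R}\mathbb C)\mathbf e)=\bigoplus_q\mathbb Cq$, the sum over all fibers $q$ of $p$ in $\Gamma$; such isomorphisms exist. *)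

From HB Require Import structures.
From mathcomp Require Import all_boot all_order all_algebra.
From mathcomp Require Import reals complex.
Set Implicit Arguments. Unset Strict Implicit. Unset Printing Implicit Defensive.
Import Order.TTheory GRing.Theory Num.Theory.
Local Open Scope ring_scope.
Local Open Scope complex_scope.

Record quiver := Quiver { qV : finType; qA : finType; qs : qA -> qV; qt : qA -> qV }.

(* A raw path is a pair (start vertex, [:: a_1; ...; a_n]); it denotes the
   path a_n ... a_1 (written right to left) when it is a [chain]:
   s(a_1) = start and t(a_k) = s(a_(k+1)).  The trivial path e_i is (i, [::]). *)
Definition rpath (Q : quiver) : Type := (qV Q * seq (qA Q))%type.

Fixpoint chain_from (Q : quiver) (v : qV Q) (l : seq (qA Q)) : bool :=
  match l with
  | [::] => true
  | a :: l' => (qs a == v) && chain_from (qt a) l'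
  end.

Definition is_path (Q : quiver) (p : rpath Q) : bool := chain_from p.1 p.2.

Definition vert_after (Q : quiver) (p : rpath Q) (k : nat) : qV Q :=
  last p.1 (map (@qt Q) (take k p.2)).

(* functions on raw paths (elements of path algebras / tensor algebras are
   the finitely supported ones vanishing off genuine paths) *)
Definition fn (Q : quiver) (X : Type) : Type := rpath Q -> X.

Definition finsupp (Q : quiver) (X : Type) (x0 : X) (f : fn Q X) : Prop :=
  (forall p, ~~ is_path p -> f p = x0) /\
  exists s : seq (rpath Q), forall p, p \notin s -> f p = x0.

Definition delta (Q : quiver) (X : Type) (x0 : X) (p : rpath Q) (d : X) : fn Q X :=
  fun q => if q == p then d else x0.

(* Convolution product over all factorizations r = p q  (p after q):
   q = first k arrows (from the start of r), p = remaining arrows,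
   starting at the junction vertex; [comb p a b] combines coefficients. *)
Definition convol (Q : quiver) (X : Type) (add : X -> X -> X) (zero : X)
    (comb : seq (qA Q) -> X -> X -> X) (f g : fn Q X) : fn Q X :=
  fun r => if is_path r then
    \big[add/zero]_(k < (size r.2).+1)
       comb (drop k r.2) (f (vert_after r k, drop k r.2)) (g (r.1, take k r.2))
  else zero.

Inductive dkind := DR | DC | DH.

Section DivRings.
Variable R : realType.

(* H : the quaternion [[a, b], [-b^*, a^*]] is stored as the pair (a, b). *)
Definition quat : Type := (R[i] * R[i])%type.
Definition Hmat (h : quat) : 'M[R[i]]_2 :=
  \matrix_(i < 2, j < 2)
    (if (i == 0) && (j == 0) then h.1 else if (i == 0) then h.2
     else if (j == 0) then - (h.2)^* else (h.1)^*).
Definition Hadd (x y : quat) : quat := (x.1 + y.1, x.2 + y.2).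
Definition Hopp (x : quat) : quat := (- x.1, - x.2).
(* matrix product of the representing matrices *)
Definition Hmul (x y : quat) : quat :=
  (x.1 * y.1 - x.2 * (y.2)^*, x.1 * y.2 + x.2 * (y.1)^*).
Definition Hreal (r : R) : quat := (r%:C, 0).
Definition Hi : quat := ('i, 0).   (* the quaternion diag(i, -i) *)

Definition Dty (k : dkind) : Type :=
  match k with DR => R | DC => R[i] | DH => quat end.

Definition Dzero (k : dkind) : Dty k :=
  match k return Dty k with DR => 0 | DC => 0 | DH => Hreal 0 end.
Definition Done (k : dkind) : Dty k :=
  match k return Dty k with DR => 1 | DC => 1 | DH => Hreal 1 end.
Definition Dadd (k : dkind) : Dty k -> Dty k -> Dty k :=
  match k return Dty k -> Dty k -> Dty k with
  | DR => fun x y => x + y | DC => fun x y => x + y | DH => Hadd end.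
Definition Dopp (k : dkind) : Dty k -> Dty k :=
  match k return Dty k -> Dty k with
  | DR => fun x => - x | DC => fun x => - x | DH => Hopp end.
Definition Dmul (k : dkind) : Dty k -> Dty k -> Dty k :=
  match k return Dty k -> Dty k -> Dty k with
  | DR => fun x y => x * y | DC => fun x y => x * y | DH => Hmul end.
Definition Dreal (k : dkind) : R -> Dty k :=
  match k return R -> Dty k with
  | DR => fun r => r | DC => fun r => r%:C | DH => Hreal end.
(* complex conjugation on C; identity on R and H (only used when k = DC) *)
Definition Dconj (k : dkind) : Dty k -> Dty k :=
  match k return Dty k -> Dty k with
  | DR => id | DC => fun x => x^* | DH => id end.

End DivRings.


(* A v-uniform modulation is given by the kind k of D (R, C or H) and,  *)
(* for k = DC, by cj : arrows -> bool, cj a = true meaning M(a) = Cbar  *)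
(* and cj a = false meaning M(a) = C (for k = DR, DH, the bimodules are  *)
(* forced to be D and cj is ignored).                                  *)
(* Each M(p) is free of rank one as a left D-module on 1_{M(p)}, and    *)
(* 1_{M(p)} . d = sigma_p(d) 1_{M(p)}, with sigma_p the composite of    *)
(* the twists of the arrows of p (conjugation for each Cbar arrow).    *)
(* An element of T is thus identified with the finitely supported      *)
(* family (d_p)_p, standing for  sum_p d_p 1_{M(p)}.                    *)
Section Tensor.
Variables (R : realType) (Q : quiver) (k : dkind) (cj : qA Q -> bool).

Local Notation D := (Dty R k).
Local Notation TF := (fn Q D).

Definition twist (l : seq (qA Q)) (d : D) : D :=
  if odd (count cj l) then Dconj d else d.

Definition isT (f : TF) : Prop := finsupp (@Dzero R k) f.
Definition T0 : TF := fun _ => @Dzero R k.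
Definition Tadd (f g : TF) : TF := fun p => Dadd (f p) (g p).
Definition Topp (f : TF) : TF := fun p => Dopp (f p).
Definition Trscale (r : R) (f : TF) : TF := fun p => Dmul (@Dreal R k r) (f p).
(* (d 1_{M(p)}) (d' 1_{M(q)}) = d sigma_p(d') 1_{M(pq)} *)
Definition Tmul (f g : TF) : TF :=
  convol (@Dadd R k) (@Dzero R k) (fun lp a b => Dmul a (twist lp b)) f g.
Definition Tone : TF := fun p => if p.2 == [::] then @Done R k else @Dzero R k.

Definition is_ideal (I : TF -> Prop) : Prop :=
  [/\ forall f, I f -> isT f,
      I T0,
      forall f g, I f -> I g -> I (Tadd f g)
    & forall f a, I f -> isT a -> I (Tmul a f) /\ I (Tmul f a)].

Definition gen_ideal (S : TF -> Prop) : TF -> Prop :=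
  fun f => forall I, is_ideal I -> (forall x, S x -> I x) -> I f.

Definition ideal_prod (I1 I2 : TF -> Prop) : TF -> Prop :=
  gen_ideal (fun f => exists x y, [/\ I1 x, I2 y & f = Tmul x y]).

Definition arrow_ideal : TF -> Prop :=
  gen_ideal (fun f => exists (a : qA Q) (d : D), f = delta (@Dzero R k) (qs a, [:: a]) d).

Fixpoint ideal_pow (I : TF -> Prop) (n : nat) : TF -> Prop :=
  match n with
  | 0 => isT
  | n'.+1 => ideal_prod (ideal_pow I n') I
  end.

Definition admissible (I : TF -> Prop) : Prop :=
  is_ideal I /\ exists m, (2 <= m)%N /\
    (forall f, ideal_pow arrow_ideal m f -> I f) /\
    (forall f, I f -> ideal_pow arrow_ideal 2 f).

(* R_I (an ideal of DQ): sum_k d_k p_k lies in R_I iff sum_k d_k 1_{M(p_k)}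
   lies in I; with the identification above both sides are the same
   family of coefficients. *)
Definition RI (I : TF -> Prop) : TF -> Prop := fun f => isT f /\ I f.

(* Complexification T (x)_R C: the element x (x) 1 + y (x) i is the     *)
(* pair (x, y).                                                         *)
Definition TC : Type := (TF * TF)%type.
Definition isTC (z : TC) : Prop := isT z.1 /\ isT z.2.
Definition TCadd (z w : TC) : TC := (Tadd z.1 w.1, Tadd z.2 w.2).
Definition TCmul (z w : TC) : TC :=
  (Tadd (Tmul z.1 w.1) (Topp (Tmul z.2 w.2)), Tadd (Tmul z.1 w.2) (Tmul z.2 w.1)).
(* complex scalars act on the second tensor factor *)
Definition TCscale (c : R[i]) (z : TC) : TC :=
  (Tadd (Trscale (complex.Re c) z.1) (Topp (Trscale (complex.Im c) z.2)),
   Tadd (Trscale (complex.Im c) z.1) (Trscale (complex.Re c) z.2)).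

(* the idempotent e = (eps_i)_i : eps_i = 1 if D = R, C; if D = H, eps_i is
   the element of H (x)_R C ~ M_2(C) (h (x) c |-> c h) corresponding to the
   matrix unit E_11, namely 1/2 (1 (x) 1) - 1/2 (Hi (x) i). *)
Definition ebf : TC :=
  match k return (fn Q (Dty R k) * fn Q (Dty R k))%type with
  | DH => (fun p => if p.2 == [::] then Hreal (2^-1) else Hreal 0,
           fun p => if p.2 == [::] then Hmul (Hreal (- 2^-1)) (Hi R) else Hreal 0)
  | DR => (fun p => if p.2 == [::] then 1 else 0, fun _ => 0)
  | DC => (fun p => if p.2 == [::] then 1 else 0, fun _ => 0)
  end.

Definition corner (z : TC) : Prop := exists w, isTC w /\ z = TCmul ebf (TCmul w ebf).

Definition IC (I : TF -> Prop) (z : TC) : Prop := I z.1 /\ I z.2.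

Definition onlyat (p : rpath Q) (f : TF) : Prop := forall q, q != p -> f q = @Dzero R k.
Definition MpC (p : rpath Q) (z : TC) : Prop := onlyat p z.1 /\ onlyat p z.2.

End Tensor.

Definition Gamma (Q : quiver) (k : dkind) (cj : qA Q -> bool) : quiver :=
  match k with
  | DC => @Quiver (qV Q * bool)%type (qA Q * bool)%type
            (* (i, false) = i, (i, true) = ibar; (a, false) = a, (a, true) = abar *)
            (fun a => (qs a.1, a.2 (+) cj a.1)) (fun a => (qt a.1, a.2))
  | _ => Q
  end.

Definition piV (Q : quiver) (k : dkind) (cj : qA Q -> bool) :
    qV (Gamma k cj) -> qV Q :=
  match k return qV (Gamma k cj) -> qV Q with
  | DC => fst | DR => id | DH => id end.

Definition piA (Q : quiver) (k : dkind) (cj : qA Q -> bool) :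
    qA (Gamma k cj) -> qA Q :=
  match k return qA (Gamma k cj) -> qA Q with
  | DC => fst | DR => id | DH => id end.

Definition fiber (Q : quiver) (k : dkind) (cj : qA Q -> bool)
    (q : rpath (Gamma k cj)) (p : rpath Q) : Prop :=
  [/\ is_path q, piV q.1 = p.1 & map (@piA Q k cj) q.2 = p.2].

Section Complexification.
Variables (R : realType) (Q : quiver) (k : dkind) (cj : qA Q -> bool).

Local Notation G := (Gamma k cj).
Local Notation CG := (fn G R[i]).

Definition isCG (h : CG) : Prop := finsupp 0 h.
Definition CGadd (h h' : CG) : CG := fun q => h q + h' q.
Definition CGscale (c : R[i]) (h : CG) : CG := fun q => c * h q.
Definition CGmul (h h' : CG) : CG := convol +%R 0 (fun _ a b => a * b) h h'.

Definition cplx_iso (Psi : @TC R Q k -> CG) : Prop :=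
  (forall z, @corner R Q k cj z -> isCG (Psi z)) /\
      (forall z w, @corner R Q k cj z -> @corner R Q k cj w -> Psi (@TCadd R Q k z w) = CGadd (Psi z) (Psi w)) /\
      (forall c z, @corner R Q k cj z -> Psi (@TCscale R Q k c z) = CGscale c (Psi z)) /\
      (forall z w, @corner R Q k cj z -> @corner R Q k cj w ->
          Psi (@TCmul R Q k cj z w) = CGmul (Psi z) (Psi w)) /\
      (forall z w, @corner R Q k cj z -> @corner R Q k cj w -> Psi z = Psi w -> z = w) /\
      (forall h, isCG h -> exists z, @corner R Q k cj z /\ Psi z = h) /\
      (forall p : rpath Q, is_path p -> forall h : CG,
        (exists z, [/\ @isTC R Q k z, @MpC R Q k p z & h = Psi (@TCmul R Q k cj (@ebf R Q k) (@TCmul R Q k cj z (@ebf R Q k)))])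
        <-> (forall q, ~ @fiber Q k cj q p -> h q = 0)).

Definition Jideal (I : fn Q (Dty R k) -> Prop) (Psi : @TC R Q k -> CG) : CG -> Prop :=
  fun h => exists z, @IC R Q k I z /\ h = Psi (@TCmul R Q k cj (@ebf R Q k) (@TCmul R Q k cj z (@ebf R Q k))).

End Complexification.

From Pilot Require Import Defs.
From HB Require Import structures.
From mathcomp Require Import all_boot all_order all_algebra.
From mathcomp Require Import reals complex ring.
From Stdlib Require Import Classical FunctionalExtensionality.
Set Implicit Arguments. Unset Strict Implicit. Unset Printing Implicit Defensive.
Import Order.TTheory GRing.Theory Num.Theory.
Local Open Scope ring_scope.

(* The complexification isomorphism maps e (M(p) (x) C) e onto the span of
   the fibers of p, so q = Psi (e w e) for some w in M(p) (x) C.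
   (->) If p lies in I, every element concentrated on p is a left multiple
   of p by a vertex scalar, hence lies in I; so w lies in I (x) C, q in J.
   (<-) If q = Psi (e z e) with z in I (x) C, injectivity of Psi gives
   e z e = e w e =: u, which lies in I (x) C and is concentrated on p.
   Since Psi u = q is nonzero, u is nonzero, so one of its components has
   an invertible coefficient at p; multiplying on the left by its inverse
   (a vertex scalar) shows p \in I. *)

(* A big operator all of whose terms but the j-th are the unit reduces to
   its j-th term; only the unit laws are needed, since the addition of the
   quaternions [Hadd] is not declared as a monoid law. *)
Section BigOnly.
Variables (T : Type) (op : T -> T -> T) (idx : T).
Hypotheses (op0x : forall x, op idx x = x) (opx0 : forall x, op x idx = x).

Lemma big_seq_only (I : eqType) (r : seq I) (j : I) (F : I -> T) :
  uniq r -> j \in r -> (forall i, i != j -> F i = idx) ->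
  \big[op/idx]_(i <- r) F i = F j.
Proof.
move=> + + F_off; elim: r => [|x r IH] //= /andP [xr ur].
rewrite big_cons in_cons => /orP [/eqP j_x|jr].
  suff -> : \big[op/idx]_(i <- r) F i = idx by rewrite opx0 j_x.
  rewrite big_seq; apply: (big_ind (fun y => y = idx)) => // [y z -> ->|i ir].
    exact: op0x.
  by apply: F_off; apply: contraNneq xr => i_j; rewrite -j_x -i_j.
rewrite F_off ?op0x ?IH //.
by apply: contraNneq xr => ->.
Qed.

Lemma big_ord_only n (j : 'I_n) (F : 'I_n -> T) :
  (forall i, i != j -> F i = idx) -> \big[op/idx]_(i < n) F i = F j.
Proof. exact/big_seq_only/mem_index_enum/index_enum_uniq. Qed.

End BigOnly.

Section DivisionRing.
Variables (R : realType) (k : dkind).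
Local Notation D := (Dty R k).
Local Notation Z := (Dzero R k).
Local Notation O := (Done R k).

Lemma Dadd0l (x : D) : Dadd Z x = x.
Proof. by case: k x => [x|x|[a b]]; rewrite /= ?add0r // /Hadd /= !add0r. Qed.

Lemma Dadd0r (x : D) : Dadd x Z = x.
Proof. by case: k x => [x|x|[a b]]; rewrite /= ?addr0 // /Hadd /= !addr0. Qed.

Lemma Dopp0 : Dopp Z = Z.
Proof. by case: k; rewrite /= ?oppr0 // /Hopp /= oppr0. Qed.

Lemma Dmul0l (x : D) : Dmul Z x = Z.
Proof. by case: k x => [x|x|[a b]]; rewrite /= ?mul0r // /Hmul /= !mul0r subr0 addr0. Qed.

Lemma Dmul0r (x : D) : Dmul x Z = Z.
Proof.
by case: k x => [x|x|[a b]]; rewrite /= ?mulr0 // /Hmul /= conjC0 !mulr0 subr0 addr0.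
Qed.

Lemma Dconj0 : Dconj Z = Z.
Proof. by case: k => //=; exact: conjC0. Qed.

Lemma Dmulr1 (x : D) : Dmul x O = x.
Proof.
case: k x => [x|x|[a b]]; rewrite /= ?mulr1 //.
by rewrite /Hmul /= conjC0 conjC1 !mulr0 subr0 !mulr1 add0r.
Qed.

Lemma DmulN1 (x : D) : Dmul (Dopp O) x = Dopp x.
Proof.
case: k x => [x|x|[a b]]; rewrite /= ?mulN1r //.
by rewrite /Hmul /Hopp /= oppr0 !mul0r subr0 addr0 !mulN1r.
Qed.

(* for H: the inverse of (a, b) is (a^*, -b) / (|a|^2 + |b|^2) *)
Lemma Dmul_linv (x : D) : x <> Z -> exists y, Dmul y x = O.
Proof.
case: k x => [x|x|[a b]] /= x_neq0.
- by exists x^-1; rewrite mulVf //; apply/eqP.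
- by exists x^-1; rewrite mulVf //; apply/eqP.
set N := a * a^* + b * b^*.
have N_neq0 : N != 0.
  apply: contra_notN x_neq0; rewrite paddr_eq0 ?mul_conjC_ge0 //.
  by rewrite !mul_conjC_eq0 => /andP [/eqP -> /eqP ->].
exists (a^* / N, - b / N); rewrite /Hmul /=.
by congr pair; rewrite /N in N_neq0 *; field.
Qed.

End DivisionRing.

Section VertexSupported.
Variables (R : realType) (Q : quiver) (k : dkind) (cj : qA Q -> bool).
Local Notation D := (Dty R k).
Local Notation Z := (Dzero R k).
Local Notation O := (Done R k).

Definition vertex_supported (A : fn Q D) : Prop :=
  forall r : rpath Q, r.2 != [::] -> A r = Z.

Definition vertex_scalar (v : qV Q) (c : D) : fn Q D := delta Z (v, [::]) c.

Definition minus_one : fn Q D := fun r => if r.2 == [::] then Dopp O else Z.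

Lemma vertex_scalar_supported v c : vertex_supported (vertex_scalar v c).
Proof. by move=> r; rewrite /vertex_scalar /delta; case: (r =P (v, [::])) => [->|]. Qed.

Lemma minus_one_supported : vertex_supported minus_one.
Proof. by move=> r /negbTE r_nontriv; rewrite /minus_one r_nontriv. Qed.

Lemma ebf_supported : vertex_supported (ebf R Q k).1 /\ vertex_supported (ebf R Q k).2.
Proof. by rewrite /vertex_supported; split; case: k => r //= /negbTE ->. Qed.

Lemma vertex_supported_isT (A : fn Q D) : vertex_supported A -> Defs.isT A.
Proof.
move=> A_supp; split.
  by move=> [v [|a l]] // _; apply: A_supp.
exists [seq (v, [::]) | v <- enum (qV Q)] => -[v l] /= not_triv.
apply: A_supp; apply: contraNneq not_triv => /= ->.
by rewrite map_f // mem_enum.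
Qed.

Lemma Tmul_vertex_l (A f : fn Q D) : vertex_supported A ->
  Tmul cj A f = fun r => if is_path r then Dmul (A (vert_after r (size r.2), [::])) (f r) else Z.
Proof.
move=> A_supp; apply: functional_extensionality => r.
rewrite /Tmul /convol; case: ifP => // _.
rewrite (big_ord_only (@Dadd0l R k) (@Dadd0r R k) (j := ord_max)) /=.
  by rewrite drop_size take_size; case: r.
move=> i i_neq; rewrite A_supp ?Dmul0l // -size_eq0 size_drop subn_eq0 -ltnNge.
by rewrite ltn_neqAle -ltnS ltn_ord andbT; move: i_neq; rewrite -(inj_eq val_inj).
Qed.

Lemma twist0 l : twist cj l Z = Z.
Proof. by rewrite /twist; case: ifP => // _; apply: Dconj0. Qed.

Lemma Tmul_vertex_r (A f : fn Q D) : vertex_supported A ->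
  Tmul cj f A = fun r => if is_path r then Dmul (f r) (twist cj r.2 (A (r.1, [::]))) else Z.
Proof.
move=> A_supp; apply: functional_extensionality => r.
rewrite /Tmul /convol; case: ifP => // _.
rewrite (big_ord_only (@Dadd0l R k) (@Dadd0r R k) (j := ord0)) /=.
  by rewrite drop0 take0 /vert_after take0; case: r.
move=> i i_neq; rewrite A_supp; last first.
  have i_pos : (0 < i)%N by rewrite lt0n; move: i_neq; rewrite -(inj_eq val_inj).
  rewrite -size_eq0 size_take -lt0n; case: ifP => // _.
  by move: (ltn_ord i); rewrite ltnS; apply: leq_trans.
by rewrite twist0 Dmul0r.
Qed.

Lemma Tmul_vertex_scalar (p : rpath Q) (f : fn Q D) c : is_path p -> onlyat p f ->
  Tmul cj (vertex_scalar (vert_after p (size p.2)) c) f = delta Z p (Dmul c (f p)).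
Proof.
move=> p_path f_at; rewrite Tmul_vertex_l; last exact: vertex_scalar_supported.
apply: functional_extensionality => r; rewrite /delta.
case: (r =P p) => [->|/eqP r_neq]; first by rewrite p_path /vertex_scalar /delta eqxx.
by rewrite f_at // Dmul0r; case: ifP.
Qed.

Lemma onlyat_add p (f g : fn Q D) : onlyat p f -> onlyat p g -> onlyat p (Tadd f g).
Proof. by move=> f_at g_at q q_neq; rewrite /Tadd f_at // g_at // Dadd0l. Qed.

Lemma onlyat_opp p (f : fn Q D) : onlyat p f -> onlyat p (Topp f).
Proof. by move=> f_at q q_neq; rewrite /Topp f_at // Dopp0. Qed.

Lemma onlyat_lmul p (A f : fn Q D) : vertex_supported A -> onlyat p f -> onlyat p (Tmul cj A f).
Proof. by move=> A_supp f_at q q_neq; rewrite Tmul_vertex_l // f_at // Dmul0r; case: ifP. Qed.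

Lemma onlyat_rmul p (A f : fn Q D) : vertex_supported A -> onlyat p f -> onlyat p (Tmul cj f A).
Proof. by move=> A_supp f_at q q_neq; rewrite Tmul_vertex_r // f_at // Dmul0l; case: ifP. Qed.

Lemma MpC_corner p (w : TC R Q k) : MpC p w ->
  MpC p (TCmul cj (ebf R Q k) (TCmul cj w (ebf R Q k))).
Proof.
move=> [w1_at w2_at]; have [e1 e2] := ebf_supported.
have [we1_at we2_at] : MpC p (TCmul cj w (ebf R Q k)).
  split; apply: onlyat_add; try apply: onlyat_opp; exact: onlyat_rmul.
split; apply: onlyat_add; try apply: onlyat_opp; exact: onlyat_lmul.
Qed.

Lemma ebf_isTC : isTC (ebf R Q k).
Proof. by have [e1 e2] := ebf_supported; split; apply: vertex_supported_isT. Qed.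

End VertexSupported.

Section Ideals.
Variables (R : realType) (Q : quiver) (k : dkind) (cj : qA Q -> bool).
Variable I : fn Q (Dty R k) -> Prop.
Hypothesis I_ideal : is_ideal cj I.
Local Notation Z := (Dzero R k).
Local Notation O := (Done R k).

Lemma I_isT f : I f -> Defs.isT f.
Proof. by case: I_ideal => H _ _ _; apply: H. Qed.

Lemma I_add f g : I f -> I g -> I (Tadd f g).
Proof. by case: I_ideal => _ _ H _; apply: H. Qed.

Lemma I_lmul a f : I f -> Defs.isT a -> I (Tmul cj a f).
Proof. by case: I_ideal => _ _ _ H f_in a_T; case: (H f a f_in a_T). Qed.

Lemma I_rmul a f : I f -> Defs.isT a -> I (Tmul cj f a).
Proof. by case: I_ideal => _ _ _ H f_in a_T; case: (H f a f_in a_T). Qed.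

Lemma I_vertex_lmul A f : I f -> vertex_supported A -> I (Tmul cj A f).
Proof. by move=> f_in /vertex_supported_isT; apply: I_lmul. Qed.

(* -f = (-1) f *)
Lemma I_opp f : I f -> I (Topp f).
Proof.
move=> f_in; suff -> : Topp f = Tmul cj (@minus_one R Q k) f.
  by apply: I_vertex_lmul => //; apply: minus_one_supported.
rewrite Tmul_vertex_l; last exact: minus_one_supported.
apply: functional_extensionality => r; rewrite /Topp /minus_one /=.
case: ifP => [_|r_path]; first by rewrite DmulN1.
by rewrite (I_isT f_in).1 ?r_path // Dopp0.
Qed.

Lemma IC_lmul (a z : TC R Q k) : IC I z -> isTC a -> IC I (TCmul cj a z).
Proof.
move=> [z1 z2] [a1 a2]; split => /=; apply: I_add; try apply: I_opp; exact: I_lmul.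
Qed.

Lemma IC_rmul (a z : TC R Q k) : IC I z -> isTC a -> IC I (TCmul cj z a).
Proof.
move=> [z1 z2] [a1 a2]; split => /=; apply: I_add; try apply: I_opp; exact: I_rmul.
Qed.

Lemma I_onlyat p f : is_path p -> I (delta Z p O) -> onlyat p f -> I f.
Proof.
move=> p_path p_in f_at.
suff -> : f = Tmul cj (vertex_scalar (vert_after p (size p.2)) (f p)) (delta Z p O).
  by apply: I_vertex_lmul => //; apply: vertex_scalar_supported.
rewrite Tmul_vertex_scalar //; last by move=> q q_neq; rewrite /delta (negbTE q_neq).
rewrite /delta eqxx Dmulr1; apply: functional_extensionality => r.
by case: (r =P p) => [->|/eqP r_neq] //; rewrite f_at.
Qed.

Lemma I_path_of_onlyat p f :
  is_path p -> I f -> onlyat p f -> f p <> Z -> I (delta Z p O).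
Proof.
move=> p_path f_in f_at /Dmul_linv [y y_inv].
rewrite -y_inv -(Tmul_vertex_scalar cj y p_path f_at).
by apply: I_vertex_lmul => //; apply: vertex_scalar_supported.
Qed.

End Ideals.

Section FiberCriterion.
Variables (R : realType) (Q : quiver) (k : dkind) (cj : qA Q -> bool).
Variables (I : fn Q (Dty R k) -> Prop) (Psi : TC R Q k -> fn (Gamma k cj) R[i]).
Hypotheses (I_ideal : is_ideal cj I) (Psi_iso : cplx_iso Psi).
Variables (p : rpath Q) (q : rpath (Gamma k cj)).
Hypotheses (p_path : is_path p) (q_fiber : fiber q p).
Local Notation Z := (Dzero R k).
Local Notation O := (Done R k).
Local Notation e := (ebf R Q k).
Local Notation sandwich z := (TCmul cj e (TCmul cj z e)).

Lemma fiber_preimage : exists w, [/\ isTC w, MpC p w & delta 0 q 1 = Psi (sandwich w)].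
Proof.
have [_ [_ [_ [_ [_ [_ Psi_fib]]]]]] := Psi_iso.
apply/(Psi_fib p p_path) => r r_fib; rewrite /delta.
by case: eqP => // r_q; case: r_fib; rewrite r_q.
Qed.

Lemma RI_to_J : RI I (delta Z p O) -> Jideal I Psi (delta 0 q 1).
Proof.
move=> [_ p_in]; have [w [_ [w1_at w2_at] q_eq]] := fiber_preimage.
by exists w; split => //; split; apply: (I_onlyat I_ideal p_path p_in).
Qed.

Lemma J_to_RI : Jideal I Psi (delta 0 q 1) -> RI I (delta Z p O).
Proof.
move=> [z [z_in q_eqz]]; have [w [w_isTC w_at q_eqw]] := fiber_preimage.
have [_ [Psi_add [_ [_ [Psi_inj _]]]]] := Psi_iso.
have z_isTC : isTC z by case: z_in => z1 z2; split; apply: (I_isT I_ideal).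
set u := sandwich w in q_eqw.
have u_corner : corner cj u by exists w.
have u_eq : sandwich z = u by apply: Psi_inj; [exists z | | rewrite -q_eqz -q_eqw].
have [u1_in u2_in] : IC I u.
  have e_isTC := ebf_isTC R Q k.
  by rewrite -u_eq; exact (IC_lmul I_ideal (IC_rmul I_ideal z_in e_isTC) e_isTC).
have [u1_at u2_at] : MpC p u by apply: MpC_corner.
suff [f [f_in f_at f_p]] : exists f, [/\ I f, onlyat p f & f p <> Z].
  have p_in := I_path_of_onlyat I_ideal p_path f_in f_at f_p.
  by split; first exact: I_isT I_ideal _ p_in.
(* otherwise u = 0, so Psi u = 0 by additivity, contradicting Psi u = q *)
apply: NNPP => no_f.
have zero_in_I (f : fn Q (Dty R k)) : I f -> onlyat p f -> f = @T0 R Q k.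
  move=> f_in f_at; apply: functional_extensionality => r.
  case: (r =P p) => [->|/eqP]; last exact: f_at.
  by apply: NNPP => f_p; apply: no_f; exists f.
have u_idem : TCadd u u = u.
  rewrite /TCadd [RHS]surjective_pairing.
  rewrite (zero_in_I _ u1_in u1_at) (zero_in_I _ u2_in u2_at).
  by congr pair; apply: functional_extensionality => r; rewrite /Tadd Dadd0l.
have := Psi_add u u u_corner u_corner; rewrite u_idem -q_eqw.
move=> /(congr1 (fun h => h q)); rewrite /CGadd /delta eqxx => one_eq.
by move/(congr1 (fun c => c - 1))/eqP: one_eq; rewrite subrr addrK eq_sym oner_eq0.
Qed.

Lemma RI_iff_J : RI I (delta Z p O) <-> Jideal I Psi (delta 0 q 1).
Proof. by split; [exact: RI_to_J | exact: J_to_RI]. Qed.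

End FiberCriterion.

Lemma fiber_identity (Q : quiver) (p q : rpath Q) : is_path p ->
  [/\ is_path q, q.1 = p.1 & [seq x | x <- q.2] = p.2] <-> q = p.
Proof.
move=> p_path; rewrite map_id; split; last by move=> ->.
by case: q p {p_path} => [v l] [v' l'] [_ /= -> ->].
Qed.

Section ComplexFibers.
Variables (Q : quiver) (cj : qA Q -> bool).
Local Notation G := (Gamma DC cj).

(* the lift of a sequence of arrows starting on sheet b: crossing a Cbar
   arrow switches sheets *)
Fixpoint lift_arrows (b : bool) (l : seq (qA Q)) : seq (qA G) :=
  match l with
  | [::] => [::]
  | a :: l' => (a, b (+) cj a) :: lift_arrows (b (+) cj a) l'
  end.

Definition lift_path (p : rpath Q) (b : bool) : rpath G := ((p.1, b), lift_arrows b p.2).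

Lemma lift_arrowsK b l : map fst (lift_arrows b l) = l.
Proof. by elim: l b => [|a l IH] b //=; rewrite IH. Qed.

Lemma lift_arrows_chain v b l : chain_from v l -> @chain_from G (v, b) (lift_arrows b l).
Proof.
elim: l v b => [|a l IH] v b //= /andP [/eqP a_src l_chain].
by rewrite addbK a_src eqxx IH.
Qed.

Lemma chain_lift_arrows v b (l : seq (qA G)) :
  @chain_from G (v, b) l -> l = lift_arrows b (map fst l).
Proof.
elim: l v b => [|[a b'] l IH] v b //= /andP [/eqP [_ b_eq] l_chain].
by rewrite -b_eq addbK -(IH _ _ l_chain).
Qed.

Lemma fiber_complex (p : rpath Q) : is_path p ->
  forall q : rpath G, fiber q p <-> q = lift_path p false \/ q = lift_path p true.
Proof.
move=> p_path q; split.
  case: q => [[v b] l] [q_path /= v_eq l_eq].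
  have /= l_lift := chain_lift_arrows q_path.
  rewrite /lift_path -v_eq -l_eq /=.
  by case: b {q_path} l_lift => <-; [right | left].
have lift_fiber b : fiber (lift_path p b) p.
  by split; rewrite /= ?lift_arrowsK //; apply: lift_arrows_chain.
by case=> ->.
Qed.

End ComplexFibers.

Theorem lemma3p10 (R : realType) :
  (forall (Q : quiver) (cj : qA Q -> bool) (I : fn Q (Dty R DR) -> Prop)
          (Psi : TC R Q DR -> fn (Gamma DR cj) R[i]) (p : rpath Q),
     admissible cj I -> cplx_iso Psi -> is_path p ->
     [/\ Gamma DR cj = Q,
         (forall q : rpath (Gamma DR cj), fiber q p <-> q = p)
       & (RI I (delta (Dzero R DR) p (Done R DR)) <-> Jideal I Psi (delta 0 p 1))]) /\
  (forall (Q : quiver) (cj : qA Q -> bool) (I : fn Q (Dty R DH) -> Prop)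
          (Psi : TC R Q DH -> fn (Gamma DH cj) R[i]) (p : rpath Q),
     admissible cj I -> cplx_iso Psi -> is_path p ->
     [/\ Gamma DH cj = Q,
         (forall q : rpath (Gamma DH cj), fiber q p <-> q = p)
       & (RI I (delta (Dzero R DH) p (Done R DH)) <-> Jideal I Psi (delta 0 p 1))]) /\
  (forall (Q : quiver) (cj : qA Q -> bool) (I : fn Q (Dty R DC) -> Prop)
          (Psi : TC R Q DC -> fn (Gamma DC cj) R[i]) (p : rpath Q),
     admissible cj I -> cplx_iso Psi -> is_path p ->
     exists p' p'' : rpath (Gamma DC cj),
       [/\ p' <> p'',
           (forall q : rpath (Gamma DC cj), fiber q p <-> q = p' \/ q = p''),
           (RI I (delta (Dzero R DC) p (Done R DC)) <-> Jideal I Psi (delta 0 p' 1))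
         & (Jideal I Psi (delta 0 p' 1) <-> Jideal I Psi (delta 0 p'' 1))]).
Proof.
split; [|split].
- move=> Q cj I Psi p [I_ideal _] Psi_iso p_path.
  have p_fibers (q : rpath (Gamma DR cj)) : fiber q p <-> q = p := fiber_identity q p_path.
  by split => //; apply: RI_iff_J => //; apply/p_fibers.
- move=> Q cj I Psi p [I_ideal _] Psi_iso p_path.
  have p_fibers (q : rpath (Gamma DH cj)) : fiber q p <-> q = p := fiber_identity q p_path.
  by split => //; apply: RI_iff_J => //; apply/p_fibers.
move=> Q cj I Psi p [I_ideal _] Psi_iso p_path.
have [lift0 lift1] : fiber (lift_path cj p false) p /\ fiber (lift_path cj p true) p.
  by split; apply/fiber_complex => //; [left | right].
exists (lift_path cj p false), (lift_path cj p true); split.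
- by case.
- exact: fiber_complex.
- exact: RI_iff_J.
by rewrite -(RI_iff_J I_ideal Psi_iso p_path lift0); apply: RI_iff_J.
Qed.
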